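(* (i) No two distinct chordal hyperplanes meet in $\mathbb{CH}^{10}$. (ii) If a discriminant hyperplane and a chordal hyperplane meet in $\mathbb{CH}^{10}$, then they are orthogonal.
   Context: Let $\omega$ be a primitive cube root of unity, $\mathcal{E}=\mathbb{Z}[\omega]$, $\theta=\omega-\bar\omega=\sqrt{-3}$. Let $\Lambda=\mathcal{E}^{11}$ with Hermitian form whose Gram matrix is $(3)\oplus M\oplus M\oplus\begin{pmatrix}0&\theta\\ \bar\theta&0\end{pmatrix}$, where $M$ is the $4\times4$ matrix with $3$ on the diagonal, $\theta$ at $(i,i+1)$, $\bar\theta$ at $(i+1,i)$, $0$ elsewhere. $\mathbb{CH}^{10}$ is the set of negative lines in $\Lambda\otimes_{\mathcal{E}}\mathbb{C}$. A root is $r\in\Lambda$ with $\langle r,r\rangle=3$; nodal if $\langle r,\Lambda\rangle=\theta\mathcal{E}$, chordal if $\langle r,\Lambda\rangle=3\mathcal{E}$. A discriminant (resp. chordal) hyperplane is $r^\perp\cap\mathbb{CH}^{10}$ for a nodal (resp. chordal) root $r$. Hyperplanes $r^\perp$ and $s^\perp$ are orthogonal when $\langle r,s\rangle=0$. *)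

From HB Require Import structures.
From mathcomp Require Import all_boot all_order all_algebra.
From mathcomp Require Import complex.
From mathcomp Require Import Rstruct.
From Stdlib Require Rdefinitions.
Set Implicit Arguments. Unset Strict Implicit. Unset Printing Implicit Defensive.
Import Order.TTheory GRing.Theory Num.Theory.
Local Open Scope ring_scope.

Definition CC := complex Rdefinitions.R.

(* omega = (-1 + i sqrt 3)/2, a primitive cube root of unity *)
Definition omega : CC := Complex (- (1/2)) (Num.sqrt 3 / 2).
(* theta = omega - conj omega = sqrt(-3) *)
Definition theta : CC := omega - conjc omega.

Definition inE (z : CC) : Prop := exists a b : int, z = a%:~R + b%:~R * omega.

(* Gram matrix entries: (3) + M + M + [[0,theta],[conj theta,0]], indices 0..10 *)
Definition gram_entry (i j : nat) : CC :=
  if (i == j) then (if (i <= 8)%N then 3 else 0)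
  else if (j == i.+1) && (i \in [:: 1; 2; 3; 5; 6; 7; 9]) then theta
  else if (i == j.+1) && (j \in [:: 1; 2; 3; 5; 6; 7; 9]) then conjc theta
  else 0.

Definition gram : 'M[CC]_11 := \matrix_(i < 11, j < 11) gram_entry i j.

Definition hform (x y : 'rV[CC]_11) : CC :=
  \sum_(i < 11) \sum_(j < 11) x 0 i * gram i j * conjc (y 0 j).

Definition inLattice (v : 'rV[CC]_11) : Prop := forall i, inE (v 0 i).

Definition is_root (r : 'rV[CC]_11) : Prop := inLattice r /\ hform r r = 3.

Definition pairing_is (r : 'rV[CC]_11) (c : CC) : Prop :=
  forall z : CC, (exists x, inLattice x /\ hform r x = z) <->
                 (exists w, inE w /\ z = c * w).

Definition nodal (r : 'rV[CC]_11) : Prop := is_root r /\ pairing_is r theta.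
Definition chordal (r : 'rV[CC]_11) : Prop := is_root r /\ pairing_is r 3.

(* CH^10: negative lines; we represent points by negative vectors
   (all notions below are invariant under nonzero scaling). *)
Definition negative (v : 'rV[CC]_11) : Prop := hform v v < 0.

Definition hyperplane (r : 'rV[CC]_11) (v : 'rV[CC]_11) : Prop :=
  negative v /\ hform v r = 0.

Definition same_hyperplane (r s : 'rV[CC]_11) : Prop :=
  forall v, hyperplane r v <-> hyperplane s v.

Definition hyperplanes_meet (r s : 'rV[CC]_11) : Prop :=
  exists v, hyperplane r v /\ hyperplane s v.

Definition roots_orthogonal (r s : 'rV[CC]_11) : Prop := hform r s = 0.

From mathcomp Require Import all_boot all_order all_algebra.
From mathcomp Require Import complex Rstruct ring lra zify.
Set Implicit Arguments. Unset Strict Implicit. Unset Printing Implicit Defensive.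
Import Order.TTheory GRing.Theory Num.Theory.
Local Open Scope ring_scope.

(* With ell x = theta x_9 - x_10, the form h(x, x) + |ell x|^2 / 2 is a positive definite
   sum of Hermitian squares, so h is positive definite on ker ell and therefore on the
   orthogonal complement of any negative vector v.  If the hyperplanes of two roots r, s
   meet at v and <s, r> = 3 w with w Eisenstein, Cauchy-Schwarz in v^perp gives either
   |w| < 1, i.e. w = 0, or s = w r.
   (i) A chordal root has all coordinates but the first divisible by theta, and its first
   coordinate has norm 1 mod 3, so <r, s> = 3 r_0 conj(s_0) mod 3 theta never vanishes for
   chordal r, s: hence s = w r and the hyperplanes coincide.
   (ii) A nodal r pairs to theta with some lattice vector, while w r (w a unit) pairs into
   3E, and theta is not in 3E: hence w = 0 and r, s are orthogonal. *)

Section ComplexConjugation.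
Variable R : rcfType.
Implicit Types x y : R[i].

Lemma conjcD x y : conjc (x + y) = conjc x + conjc y. Proof. exact: rmorphD. Qed.
Lemma conjcB x y : conjc (x - y) = conjc x - conjc y. Proof. exact: rmorphB. Qed.
Lemma conjcN x : conjc (- x) = - conjc x. Proof. exact: rmorphN. Qed.
Lemma conjcM x y : conjc (x * y) = conjc x * conjc y. Proof. exact: rmorphM. Qed.
Lemma conjcX x n : conjc (x ^+ n) = conjc x ^+ n. Proof. exact: rmorphXn. Qed.
Lemma conjc_int (n : int) : conjc (n%:~R : R[i]) = n%:~R. Proof. exact: rmorph_int. Qed.

End ComplexConjugation.

Lemma addr_ge0_eq0 (R : numDomainType) (x y : R) :
  0 <= x -> 0 <= y -> x + y = 0 -> x = 0 /\ y = 0.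
Proof. by move=> x_ge0 y_ge0 /eqP; rewrite paddr_eq0 // => /andP[/eqP -> /eqP ->]. Qed.

Lemma mulr_normsq_ge0 (R : numDomainType) (c z : R) : 0 <= c -> 0 <= c * `|z| ^+ 2.
Proof. by move=> c_ge0; rewrite mulr_ge0 ?exprn_ge0. Qed.

Lemma mulr_normsq_eq0 (R : numDomainType) (c z : R) :
  c != 0 -> (c * `|z| ^+ 2 == 0) = (z == 0).
Proof. by move=> c_neq0; rewrite mulf_eq0 (negbTE c_neq0) sqrf_eq0 normr_eq0. Qed.

Lemma three_neq0 : (3 : CC) != 0.
Proof. by rewrite pnatr_eq0. Qed.

Lemma omega_sqr : omega * omega = -1 - omega.
Proof.
rewrite /omega; apply/eqP; rewrite eq_complex /=.
have s3 : Num.sqrt (3 : Rdefinitions.R) * Num.sqrt 3 = 3 by rewrite -expr2 sqr_sqrtr // ler0n.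
by apply/andP; split; apply/eqP; nra.
Qed.

Lemma conj_omega : conjc omega = -1 - omega.
Proof. by rewrite /omega; apply/eqP; rewrite eq_complex /=; apply/andP; split; apply/eqP; lra. Qed.

Lemma theta_omega : theta = 1 + 2 * omega.
Proof. by rewrite /theta conj_omega; ring. Qed.

Lemma conj_theta : conjc theta = - theta.
Proof. by rewrite /theta conjcB conjcK opprB. Qed.

Lemma theta_sqr : theta * theta = -3.
Proof.
rewrite theta_omega.
transitivity (1 + 4 * omega + 4 * (omega * omega)); first ring.
by rewrite omega_sqr; ring.
Qed.

Lemma theta_norm : theta * conjc theta = 3.
Proof. by rewrite conj_theta mulrN theta_sqr opprK. Qed.

Lemma theta_neq0 : theta != 0.
Proof.
apply/eqP=> t0; have := theta_sqr; rewrite t0 mul0r => /eqP.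
by rewrite eq_sym oppr_eq0 pnatr_eq0.
Qed.

Lemma conj_theta_div : conjc theta = 3 / theta.
Proof. by rewrite -theta_norm mulrAC divff ?mul1r // theta_neq0. Qed.

Lemma inE_int (n : int) : inE n%:~R.
Proof. by exists n, 0; ring. Qed.

Lemma inE_theta : inE theta.
Proof. by exists 1, 2; rewrite theta_omega; ring. Qed.

Lemma inE_add x y : inE x -> inE y -> inE (x + y).
Proof. by move=> [a [b ->]] [c [d ->]]; exists (a + c), (b + d); ring. Qed.

Lemma inE_opp x : inE x -> inE (- x).
Proof. by move=> [a [b ->]]; exists (- a), (- b); ring. Qed.

Lemma inE_mul x y : inE x -> inE y -> inE (x * y).
Proof.
move=> [a [b ->]] [c [d ->]]; exists (a * c - b * d), (a * d + b * c - b * d).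
transitivity (a%:~R * c%:~R + (a%:~R * d%:~R + b%:~R * c%:~R) * omega
   + b%:~R * d%:~R * (omega * omega) : CC); first ring.
by rewrite omega_sqr; ring.
Qed.

Lemma inE_expr x n : inE x -> inE (x ^+ n).
Proof. by move=> xE; elim: n => [|n IHn]; [exact: (inE_int 1) | rewrite exprS; apply: inE_mul]. Qed.

Lemma inE_conj x : inE x -> inE (conjc x).
Proof.
move=> [a [b ->]]; exists (a - b), (- b).
by rewrite conjcD conjcM !conjc_int conj_omega; ring.
Qed.

Lemma inE_norm z : inE z -> exists n : int, z * conjc z = n%:~R.
Proof.
move=> [a [b ->]]; exists (a * a - a * b + b * b).
rewrite conjcD conjcM !conjc_int conj_omega.
transitivity ((a * a - a * b)%:~R - b%:~R * b%:~R * (omega * omega + omega) : CC); first ring.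
by rewrite omega_sqr; ring.
Qed.

Lemma inE_norm_lt1 z : inE z -> z * conjc z < 1 -> z = 0.
Proof.
move=> /inE_norm [n nz] lt1.
have n_ge0 : 0 <= n%:~R :> CC by rewrite -nz mulcJ_ge0.
have n0 : n = 0 by move: n_ge0 lt1; rewrite nz ler0z ltrz1; lia.
by move/eqP: nz; rewrite n0 mulf_eq0 conjc_eq0 orbb => /eqP.
Qed.

Lemma theta_dvd_int e (m : int) : inE e -> theta * e = m%:~R -> (3 %| m)%Z.
Proof.
move=> /inE_norm [n en] te.
have mm : m * m = 3 * n.
  apply/eqP; rewrite -(eqr_int CC) !intrM -{2}(conjc_int _ m) -te conjcM -en.
  apply/eqP; transitivity (theta * conjc theta * (e * conjc e)); first ring.
  by rewrite theta_norm.
have : (3 %| m * m)%Z by rewrite mm dvdz_mulr.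
by rewrite !dvdzE abszM Euclid_dvdM // orbb.
Qed.

Lemma theta_notin_3E e : inE e -> theta <> 3 * e.
Proof.
move=> /inE_norm [n en] te.
have : 3 = 9 * n.
  apply/eqP; rewrite -(eqr_int CC) intrM -en; apply/eqP.
  transitivity (theta * conjc theta); first by rewrite theta_norm.
  by rewrite te conjcM conjc_nat; ring.
lia.
Qed.

Definition dvdth (n : nat) (z : CC) : Prop := exists2 e, inE e & z = theta ^+ n * e.

Lemma dvdth_add n x y : dvdth n x -> dvdth n y -> dvdth n (x + y).
Proof. by move=> [e eE ->] [f fE ->]; exists (e + f); [apply: inE_add | ring]. Qed.

Lemma dvdth_opp n x : dvdth n x -> dvdth n (- x).
Proof. by move=> [e eE ->]; exists (- e); [apply: inE_opp | ring]. Qed.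

Lemma dvdth_addr n x y : dvdth n x -> dvdth n (x + y) -> dvdth n y.
Proof. by move=> /dvdth_opp Dx /(dvdth_add Dx); rewrite addKr. Qed.

Lemma dvdth_addl n x y : dvdth n y -> dvdth n (x + y) -> dvdth n x.
Proof. by rewrite addrC; apply: dvdth_addr. Qed.

Lemma dvdth_mul m n x y : dvdth m x -> dvdth n y -> dvdth (m + n) (x * y).
Proof. by move=> [e eE ->] [f fE ->]; exists (e * f); [apply: inE_mul | rewrite exprD; ring]. Qed.

Lemma dvdth_conj n z : dvdth n z -> dvdth n (conjc z).
Proof.
move=> [e eE ->]; exists ((-1) ^+ n * conjc e).
  by apply: inE_mul (inE_expr _ (inE_int (-1))) (inE_conj eE).
by rewrite conjcM conjcX conj_theta [(- theta) ^+ n]exprNn -mulrA mulrCA.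
Qed.

Lemma dvdth_mulr_theta n z : dvdth n.+1 (z * theta) -> dvdth n z.
Proof. by move=> [e eE]; rewrite exprSr mulrAC => /(mulIf theta_neq0) ->; exists e. Qed.

Lemma dvdth_mulr_conj_theta n z : dvdth n.+1 (z * conjc theta) -> dvdth n z.
Proof. by rewrite conj_theta mulrN => /dvdth_opp; rewrite opprK; apply: dvdth_mulr_theta. Qed.

Lemma dvdth_theta : dvdth 1 theta.
Proof. by exists 1; [exact: (inE_int 1) | rewrite expr1 mulr1]. Qed.

Lemma dvdth_conj_theta : dvdth 1 (conjc theta).
Proof. exact: dvdth_conj dvdth_theta. Qed.

Lemma dvdth_3 : dvdth 1 3.
Proof. by exists (- theta); [apply: inE_opp inE_theta | rewrite expr1 mulrN theta_sqr opprK]. Qed.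

Lemma dvdth_3E w : inE w -> dvdth 2 (3 * w).
Proof. by move=> wE; exists (- w); [apply: inE_opp | rewrite expr2 theta_sqr; ring]. Qed.

Lemma dvdth3_3thetaE z : dvdth 3 z -> exists2 e, inE e & z = 3 * theta * e.
Proof.
move=> [e eE ->]; exists (- e); first exact: inE_opp.
by rewrite exprS expr2 mulrA theta_sqr; ring.
Qed.

Section HyperbolicHermitianForm.
Variables (V : lmodType CC) (h : V -> V -> CC) (ell : V -> CC).
Hypothesis h_linear : forall a b x y z, h (a *: x + b *: y) z = a * h x z + b * h y z.
Hypothesis h_hermitian : forall x y, h y x = conjc (h x y).
Hypothesis ell_linear : forall a b x y, ell (a *: x + b *: y) = a * ell x + b * ell y.
Hypothesis h_ge0_ker : forall x, ell x = 0 -> 0 <= h x x.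
Hypothesis h_anisotropic_ker : forall x, ell x = 0 -> h x x = 0 -> x = 0.

Lemma h_semilinear a b x y z : h z (a *: x + b *: y) = conjc a * h z x + conjc b * h z y.
Proof. by rewrite h_hermitian h_linear conjcD !conjcM -!h_hermitian. Qed.

Lemma hZl a x z : h (a *: x) z = a * h x z.
Proof. by have := h_linear a 0 x x z; rewrite scale0r addr0 mul0r addr0. Qed.

Lemma hZr a x z : h z (a *: x) = conjc a * h z x.
Proof. by rewrite h_hermitian hZl conjcM -h_hermitian. Qed.

Lemma orthogonal_negative_posdef u v : h v v < 0 -> h v u = 0 -> u != 0 -> 0 < h u u.
Proof.
move=> v_neg vu u_neq0.
have uv : h u v = 0 by rewrite h_hermitian vu conjc0.
have lv_gt0 : 0 < `|ell v| ^+ 2.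
  rewrite exprn_gt0 // normr_gt0; apply/eqP => /h_ge0_ker.
  by move=> /(lt_le_trans v_neg); rewrite ltxx.
pose w := ell v *: u + (- ell u) *: v.
have hw : h w w = `|ell v| ^+ 2 * h u u + `|ell u| ^+ 2 * h v v.
  by rewrite /w h_linear !h_semilinear uv vu !sqr_normc conjcN; ring.
have hw_ge0 : 0 <= h w w by apply: h_ge0_ker; rewrite /w ell_linear; ring.
have lu_vv_le0 : `|ell u| ^+ 2 * h v v <= 0.
  by apply: mulr_ge0_le0; [exact: exprn_ge0 | exact: ltW].
have uu_ge0 : 0 <= h u u.
  rewrite -(pmulr_rge0 _ lv_gt0) -[_ * h u u](addrK (`|ell u| ^+ 2 * h v v)) -hw.
  by rewrite addr_ge0 // oppr_ge0.
rewrite lt_def uu_ge0 andbT; apply: contraNneq u_neq0 => uu0.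
have lu0 : `|ell u| ^+ 2 * h v v = 0.
  apply: le_anti; rewrite lu_vv_le0 /=.
  by move: hw_ge0; rewrite hw uu0 mulr0 add0r.
apply/eqP; apply: h_anisotropic_ker uu0.
by move/eqP: lu0; rewrite mulf_eq0 (negbTE (ltr0_neq0 v_neg)) orbF expf_eq0 /= normr_eq0 => /eqP.
Qed.

Lemma orthogonal_negative_cauchy_schwarz c r s v w :
    0 < c -> h r r = c -> h s s = c -> h v v < 0 -> h v r = 0 -> h v s = 0 ->
  h s r = c * w -> s = w *: r \/ `|w| ^+ 2 < 1.
Proof.
move=> c_gt0 rr ss v_neg vr vs sr.
pose u := 1 *: s + (- w) *: r.
have [u0|u_neq0] := eqVneq u 0.
  by left; apply/eqP; rewrite -subr_eq0; apply/eqP; move: u0; rewrite /u scale1r scaleNr.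
have cc : conjc c = c by rewrite -rr -h_hermitian.
have hu : h u u = c * (1 - `|w| ^+ 2).
  rewrite /u h_linear !h_semilinear rr ss sr (h_hermitian s r) sr.
  by rewrite !conjcM conjcN cc conjc1 sqr_normc; ring.
have vu : h v u = 0 by rewrite /u h_semilinear vr vs; ring.
right; have := orthogonal_negative_posdef v_neg vu u_neq0.
by rewrite hu pmulr_rgt0 // subr_gt0.
Qed.

End HyperbolicHermitianForm.

(* [inord] sends indices >= 11 to 0, so only [i < 11] is meaningful. *)
Definition coordn (x : 'rV[CC]_11) (i : nat) : CC := x 0 (inord i).

Definition mform (x y : nat -> CC) (k : nat) : CC :=
    3 * x k * y k + x k * theta * y k.+1
  + x k.+1 * conjc theta * y k + 3 * x k.+1 * y k.+1 + x k.+1 * theta * y k.+2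
  + x k.+2 * conjc theta * y k.+1 + 3 * x k.+2 * y k.+2 + x k.+2 * theta * y k.+3
  + x k.+3 * conjc theta * y k.+2 + 3 * x k.+3 * y k.+3.

Lemma hform_expand x y : hform x y =
    3 * coordn x 0 * conjc (coordn y 0)
  + mform (coordn x) (conjc \o coordn y) 1 + mform (coordn x) (conjc \o coordn y) 5
  + coordn x 9 * theta * conjc (coordn y 10) + coordn x 10 * conjc theta * conjc (coordn y 9).
Proof.
rewrite /hform conj_theta.
transitivity (\sum_(0 <= i < 11) \sum_(0 <= j < 11)
                coordn x i * gram_entry i j * conjc (coordn y j)).
  rewrite big_mkord; apply: eq_bigr => i _; rewrite big_mkord; apply: eq_bigr => j _.
  by rewrite /coordn !inord_val mxE.
rewrite /index_iota /= !big_cons !big_nil /gram_entry /mform.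
by rewrite !conj_theta; move: theta => t /=; ring.
Qed.

Lemma coordn_linear a b x y i : coordn (a *: x + b *: y) i = a * coordn x i + b * coordn y i.
Proof. by rewrite /coordn !mxE. Qed.

Lemma coordn_eq0 x : (forall i, (i < 11)%N -> coordn x i = 0) -> x = 0.
Proof. by move=> x0; apply/rowP => i; rewrite mxE -(x0 i (ltn_ord i)) /coordn inord_val. Qed.

Lemma hform_linear a b x y z : hform (a *: x + b *: y) z = a * hform x z + b * hform y z.
Proof. by rewrite !hform_expand /mform /= !coordn_linear; ring. Qed.

Lemma hform_hermitian x y : hform y x = conjc (hform x y).
Proof.
rewrite !hform_expand /mform !conj_theta.
move: theta conj_theta => t conj_t /=.
by rewrite !(conjcD, conjcM, conjcN, conjcK, conjc_nat) conj_t; ring.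
Qed.

Lemma hformZl a x z : hform (a *: x) z = a * hform x z.
Proof. exact: (@hZl _ hform hform_linear). Qed.

Lemma hformZr a x z : hform z (a *: x) = conjc a * hform z x.
Proof. exact: (@hZr _ hform hform_linear hform_hermitian). Qed.

Lemma mform_sum_squares (x : nat -> CC) k : mform x (conjc \o x) k =
    3 * `|x k + conjc theta / 3 * x k.+1| ^+ 2 + 2 * `|x k.+1 + conjc theta / 2 * x k.+2| ^+ 2
  + 3 / 2 * `|x k.+2 + 2 * conjc theta / 3 * x k.+3| ^+ 2 + `|x k.+3| ^+ 2.
Proof.
rewrite /mform !sqr_normc !conj_theta_div.
move: theta theta_neq0 conj_theta_div => t t_neq0 conj_t /=.
by rewrite !(conjcD, conjcM, conjc_inv, conjc_nat) conj_t; field.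
Qed.

Lemma mform_ge0 x k : 0 <= mform x (conjc \o x) k.
Proof.
rewrite mform_sum_squares -[`|x k.+3| ^+ 2]mul1r.
by rewrite !addr_ge0 // mulr_normsq_ge0 // divr_ge0.
Qed.

Lemma mform_eq0 x k : mform x (conjc \o x) k = 0 ->
  [/\ x k = 0, x k.+1 = 0, x k.+2 = 0 & x k.+3 = 0].
Proof.
rewrite mform_sum_squares -[`|x k.+3| ^+ 2]mul1r.
move=> /eqP; rewrite !paddr_eq0; try by rewrite ?addr_ge0 ?mulr_normsq_ge0 ?divr_ge0.
rewrite !mulr_normsq_eq0 ?oner_neq0 ?pnatr_eq0 ?mulf_neq0 ?invr_eq0 ?pnatr_eq0 //.
move=> /andP[/andP[/andP[/eqP a /eqP b] /eqP c] /eqP d].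
have c' : x k.+2 = 0 by rewrite d mulr0 addr0 in c.
have b' : x k.+1 = 0 by rewrite c' mulr0 addr0 in b.
by rewrite b' mulr0 addr0 in a.
Qed.

Definition ell (x : 'rV[CC]_11) : CC := theta * coordn x 9 - coordn x 10.

Lemma ell_linear a b x y : ell (a *: x + b *: y) = a * ell x + b * ell y.
Proof. by rewrite /ell !coordn_linear; ring. Qed.

Lemma hform_sum_squares x : hform x x =
    3 * `|coordn x 0| ^+ 2 + mform (coordn x) (conjc \o coordn x) 1
  + mform (coordn x) (conjc \o coordn x) 5 + 1 / 2 * `|theta * coordn x 9 + coordn x 10| ^+ 2
  - 1 / 2 * `|ell x| ^+ 2.
Proof.
rewrite hform_expand /ell !sqr_normc !conj_theta_div.
move: theta theta_neq0 conj_theta_div => t t_neq0 conj_t.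
by rewrite !(conjcD, conjcB, conjcM, conjc_inv, conjc_nat) conj_t; field.
Qed.

Section PositiveOnKernel.
Variable x : 'rV[CC]_11.
Hypothesis ell_x : ell x = 0.

Let A := 3 * `|coordn x 0| ^+ 2.
Let M k := mform (coordn x) (conjc \o coordn x) k.
Let B := 1 / 2 * `|theta * coordn x 9 + coordn x 10| ^+ 2.

Let hxx : hform x x = A + M 1 + M 5 + B.
Proof. by rewrite hform_sum_squares ell_x normr0 expr0n /= mulr0 subr0. Qed.

Let A_ge0 : 0 <= A. Proof. exact: mulr_normsq_ge0. Qed.
Let M_ge0 k : 0 <= M k. Proof. exact: mform_ge0. Qed.
Let B_ge0 : 0 <= B. Proof. by rewrite mulr_normsq_ge0 ?divr_ge0. Qed.
Let AM1_ge0 : 0 <= A + M 1. Proof. exact: addr_ge0 A_ge0 (M_ge0 1). Qed.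
Let AM_ge0 : 0 <= A + M 1 + M 5. Proof. exact: addr_ge0 AM1_ge0 (M_ge0 5). Qed.

Lemma hform_ge0_ker : 0 <= hform x x.
Proof. by rewrite hxx; apply: addr_ge0 AM_ge0 B_ge0. Qed.

Lemma hform_anisotropic_ker : hform x x = 0 -> x = 0.
Proof.
rewrite hxx => /(addr_ge0_eq0 AM_ge0 B_ge0)[/(addr_ge0_eq0 AM1_ge0 (M_ge0 5))[]].
move=> /(addr_ge0_eq0 A_ge0 (M_ge0 1))[x0 /mform_eq0[x1 x2 x3 x4]] /mform_eq0[x5 x6 x7 x8].
move/eqP: x0; rewrite /A mulr_normsq_eq0 ?pnatr_eq0 // => /eqP x0.
move=> /eqP; rewrite /B mulr_normsq_eq0 ?mul1r ?invr_eq0 ?pnatr_eq0 // => /eqP x9_x10.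
have x10 : coordn x 10 = theta * coordn x 9 by apply/esym/eqP; rewrite -subr_eq0; apply/eqP.
have x9 : coordn x 9 = 0.
  move/eqP: x9_x10; rewrite x10 -mulr2n -mulr_natl !mulf_eq0 pnatr_eq0 (negbTE theta_neq0) /=.
  by move/eqP.
rewrite x9 mulr0 in x10.
by apply: coordn_eq0 => -[|[|[|[|[|[|[|[|[|[|[|i]]]]]]]]]]] // _.
Qed.

End PositiveOnKernel.

Lemma meeting_roots_dichotomy r s w : hform r r = 3 -> hform s s = 3 -> hyperplanes_meet r s ->
  inE w -> hform s r = 3 * w -> w = 0 \/ s = w *: r.
Proof.
move=> rr ss [v [[v_neg vr] [_ vs]]] wE sr.
have [|w_lt1] := @orthogonal_negative_cauchy_schwarz _ hform ell hform_linear hform_hermitian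
  ell_linear hform_ge0_ker hform_anisotropic_ker _ _ _ _ _ (ltr0Sn CC 2) rr ss v_neg vr vs sr.
  by right.
by left; apply: inE_norm_lt1; rewrite // -sqr_normc.
Qed.

Lemma same_hyperplane_scale r c : c != 0 -> same_hyperplane r (c *: r).
Proof.
move=> c_neq0 v; rewrite /hyperplane hformZr.
split=> -[v_neg vr]; split=> //; first by rewrite vr mulr0.
by move/eqP: vr; rewrite mulf_eq0 conjc_eq0 (negbTE c_neq0) => /eqP.
Qed.

Lemma delta_lattice k : inLattice (delta_mx 0 k).
Proof. by move=> j; rewrite mxE; case: (_ && _); [exact: (inE_int 1) | exact: (inE_int 0)]. Qed.

Lemma coordn_delta j k : (j < 11)%N -> (k < 11)%N ->
  coordn (delta_mx 0 (inord k)) j = (j == k)%:R.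
Proof. by move=> j_lt k_lt; rewrite /coordn mxE eqxx /= -val_eqE /= !inordK. Qed.

Lemma chordal_pairing r x : chordal r -> inLattice x -> exists2 w, inE w & hform r x = 3 * w.
Proof.
move=> [_ r_pair] xL.
by have [w [wE ->]] := (r_pair _).1 (ex_intro _ x (conj xL erefl)); exists w.
Qed.

Lemma mblock_dvdth a b c d : inE a -> inE b -> inE c -> inE d ->
    dvdth 2 (3 * a + b * conjc theta) -> dvdth 2 (a * theta + 3 * b + c * conjc theta) ->
    dvdth 2 (b * theta + 3 * c + d * conjc theta) -> dvdth 2 (c * theta + 3 * d) ->
  [/\ dvdth 1 a, dvdth 1 b, dvdth 1 c & dvdth 1 d].
Proof.
move=> aE bE cE dE col1 col2 col3 col4.
have Db : dvdth 1 b by apply: dvdth_mulr_conj_theta; apply: dvdth_addr col1; apply: dvdth_3E.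
have Dc : dvdth 1 c by apply: dvdth_mulr_theta; apply: dvdth_addl col4; apply: dvdth_3E.
have Da : dvdth 1 a.
  apply: dvdth_mulr_theta; apply: dvdth_addl (dvdth_3E bE) _; apply: dvdth_addl col2.
  exact: dvdth_mul Dc dvdth_conj_theta.
have Dd : dvdth 1 d.
  apply: dvdth_mulr_conj_theta; apply: dvdth_addr col3.
  exact: dvdth_add (dvdth_mul Db dvdth_theta) (dvdth_3E cE).
by [].
Qed.

Ltac gram_column := rewrite hform_expand /mform !conj_theta /= !coordn_delta // !conjc_nat /=; ring.

Lemma chordal_coordn_dvdth r : chordal r -> forall i, (0 < i < 11)%N -> dvdth 1 (coordn r i).
Proof.
move=> cr; have E i : inE (coordn r i) := cr.1.1 _.
have col k c : hform r (delta_mx 0 (inord k)) = c -> dvdth 2 c.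
  by move=> <-; have [w wE ->] := chordal_pairing cr (delta_lattice (inord k)); apply: dvdth_3E.
have [D1 D2 D3 D4] : [/\ dvdth 1 (coordn r 1), dvdth 1 (coordn r 2),
                        dvdth 1 (coordn r 3) & dvdth 1 (coordn r 4)].
  by apply: mblock_dvdth; try exact: E;
    [apply: (col 1) | apply: (col 2) | apply: (col 3) | apply: (col 4)]; gram_column.
have [D5 D6 D7 D8] : [/\ dvdth 1 (coordn r 5), dvdth 1 (coordn r 6),
                        dvdth 1 (coordn r 7) & dvdth 1 (coordn r 8)].
  by apply: mblock_dvdth; try exact: E;
    [apply: (col 5) | apply: (col 6) | apply: (col 7) | apply: (col 8)]; gram_column.
have D9 : dvdth 1 (coordn r 9) by apply: dvdth_mulr_theta; apply: (col 10); gram_column.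
have D10 : dvdth 1 (coordn r 10) by apply: dvdth_mulr_conj_theta; apply: (col 9); gram_column.
by move=> [|[|[|[|[|[|[|[|[|[|[|i]]]]]]]]]]].
Qed.

Lemma chordal_hform_mod r s : chordal r -> chordal s ->
  exists2 e, inE e & hform r s = 3 * (coordn r 0 * conjc (coordn s 0)) + 3 * theta * e.
Proof.
move=> cr cs.
have Dr := chordal_coordn_dvdth cr.
have Ds i : (0 < i < 11)%N -> dvdth 1 (conjc (coordn s i)).
  by move=> i_bd; apply/dvdth_conj/(chordal_coordn_dvdth cs).
have D3 a b c : dvdth 1 a -> dvdth 1 b -> dvdth 1 c -> dvdth 3 (a * b * c).
  by move=> Da Db Dc; apply: dvdth_mul (dvdth_mul Da Db) Dc.
have [e eE rest] : exists2 e, inE e &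
    mform (coordn r) (conjc \o coordn s) 1 + mform (coordn r) (conjc \o coordn s) 5
  + coordn r 9 * theta * conjc (coordn s 10) + coordn r 10 * conjc theta * conjc (coordn s 9)
  = 3 * theta * e.
  apply: dvdth3_3thetaE; repeat apply: dvdth_add; apply: D3;
    first [exact: dvdth_3 | exact: dvdth_theta | exact: dvdth_conj_theta
          | by apply: Dr | by apply: Ds].
by exists e; rewrite // hform_expand -rest; ring.
Qed.

Lemma chordal_norm_coordn0 r : chordal r ->
  exists k : int, coordn r 0 * conjc (coordn r 0) = (1 + 3 * k)%:~R.
Proof.
move=> cr; have [e eE rr] := chordal_hform_mod cr cr.
have [n n_def] := inE_norm (cr.1.1 (inord 0)).
have : theta * e = (1 - n)%:~R.
  apply: (mulfI three_neq0).
  transitivity (hform r r - 3 * (coordn r 0 * conjc (coordn r 0))); first by rewrite rr; ring.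
  by rewrite cr.1.2 [coordn r 0 * _]n_def intrB; ring.
move=> /(theta_dvd_int eE) /dvdzP[k k_def].
by exists (- k); rewrite [coordn r 0 * _]n_def; congr intmul; lia.
Qed.

Lemma chordal_hform_neq0 r s : chordal r -> chordal s -> hform r s != 0.
Proof.
move=> cr cs; apply/eqP => rs0.
have [e eE rs] := chordal_hform_mod cr cs.
have [m m_def] := inE_norm eE.
have [kr kr_def] := chordal_norm_coordn0 cr.
have [ks ks_def] := chordal_norm_coordn0 cs.
have r0s0 : coordn r 0 * conjc (coordn s 0) = - (theta * e).
  by apply: (mulfI three_neq0); apply/eqP; rewrite -subr_eq0 -rs0 rs; apply/eqP; ring.
have : ((1 + 3 * kr) * (1 + 3 * ks))%:~R = (3 * m)%:~R :> CC.
  rewrite !intrM -kr_def -ks_def -m_def.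
  transitivity (coordn r 0 * conjc (coordn s 0) * conjc (coordn r 0 * conjc (coordn s 0))).
    by rewrite conjcM conjcK; ring.
  rewrite r0s0 conjcN conjcM.
  by transitivity (theta * conjc theta * (e * conjc e)); [ring | rewrite theta_norm].
by move/eqP; rewrite eqr_int => /eqP; lia.
Qed.

Lemma nodal_scale_not_chordal r w : inE w -> nodal r -> ~ chordal (w *: r).
Proof.
move=> wE [[rL rr] r_pair] cs.
have [x [xL rx]] : exists x, inLattice x /\ hform r x = theta.
  by apply/(r_pair theta).2; exists 1; split; [exact: (inE_int 1) | rewrite mulr1].
have [e eE wrx] := chordal_pairing cs xL.
have w_unit : w * conjc w = 1.
  by apply: (mulIf three_neq0); rewrite mul1r -mulrA -rr -hformZr -hformZl cs.1.2.
have wth : w * theta = 3 * e by rewrite -rx -hformZl.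
apply: (theta_notin_3E (inE_mul (inE_conj wE) eE)).
by rewrite -[theta]mul1r -{1}w_unit mulrAC wth; ring.
Qed.

Theorem theorem8p2 :
  (forall r s, chordal r -> chordal s -> ~ same_hyperplane r s ->
     ~ hyperplanes_meet r s) /\
  (forall r s, nodal r -> chordal s -> hyperplanes_meet r s -> roots_orthogonal r s).
Proof.
split=> [r s cr cs not_same meet | r s nr cs meet].
- have [w wE sr] := chordal_pairing cs cr.1.1.
  have [w0|s_wr] := meeting_roots_dichotomy cr.1.2 cs.1.2 meet wE sr.
    by move: (chordal_hform_neq0 cs cr); rewrite sr w0 mulr0 eqxx.
  apply: not_same; rewrite s_wr; apply: same_hyperplane_scale.
  apply/eqP => w0; move: cs.1.2; rewrite s_wr w0 hformZl mul0r => /eqP.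
  by rewrite eq_sym (negbTE three_neq0).
- have [w wE sr] := chordal_pairing cs nr.1.1.
  have [w0|s_wr] := meeting_roots_dichotomy nr.1.2 cs.1.2 meet wE sr.
    by rewrite /roots_orthogonal hform_hermitian sr w0 mulr0 conjc0.
  by case: (nodal_scale_not_chordal wE nr); rewrite -s_wr.
Qed.
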